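(* Let $X$, $Y$ be disjoint sets of cardinality at least two, and suppose $M\le\mathrm{Sym}(X)$ and $N\le\mathrm{Sym}(Y)$ are transitive. If, in their respective permutation topologies, $M$ is compactly generated and every point stabiliser in $M$ is compact, and $N$ is compact, then $M\boxtimes N$ is compactly generated and every point stabiliser in $M\boxtimes N$ is compact (in the permutation topology of $\mathrm{Sym}(V_Y)$).
   Context: For a set $V$, the permutation topology on $\mathrm{Sym}(V)$ is the topology of pointwise convergence (pointwise stabilisers of finite subsets form a basis of identity neighbourhoods). Let $T$ be the $(|X|,|Y|)$-biregular tree with natural bipartition $VT=V_X\sqcup V_Y$ (vertices in $V_X$ have valency $|X|$, in $V_Y$ valency $|Y|$). $A(v)$, $\overline{A}(v)$ are the sets of arcs (ordered pairs of adjacent vertices) with origin, resp. terminus, $v$. A legal colouring is a map $c:AT\to X\cup Y$ restricting to a bijection $A(v)\to X$ for $v\in V_X$, to a bijection $A(v)\to Y$ for $v\in V_Y$, and constant on each $\overline{A}(v)$. $U_c(M,N)$ is the group of $g\in\mathrm{Aut}(T)$ with $gV_X=V_X$ and $c|_{A(gv)}\circ g|_{A(v)}\circ(c|_{A(v)})^{-1}$ in $M$ for $v\in V_X$ and in $N$ for $v\in V_Y$. The box product $M\boxtimes N\le\mathrm{Sym}(V_Y)$ is the group induced on $V_Y$ by $U_c(M,N)$. *)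

From Stdlib Require Import List.
Import ListNotations.


Definition is_perm {A : Type} (f : A -> A) : Prop :=
  exists g : A -> A, (forall x, g (f x) = x) /\ (forall y, f (g y) = y).

Definition perm_group {A : Type} (G : (A -> A) -> Prop) : Prop :=
  (forall g, G g -> is_perm g) /\
  G (fun x => x) /\
  (forall g h, G g -> G h -> G (fun x => g (h x))) /\
  (forall g, G g -> exists h, G h /\ (forall x, h (g x) = x) /\ (forall x, g (h x) = x)).

Definition transitive {A : Type} (G : (A -> A) -> Prop) : Prop :=
  forall a b : A, exists g, G g /\ g a = b.

Definition stab {A : Type} (G : (A -> A) -> Prop) (a : A) : (A -> A) -> Prop :=
  fun g => G g /\ g a = a.

Definition agree_on {A B : Type} (F : list A) (f g : A -> B) : Prop :=
  forall a, In a F -> f a = g a.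

Definition pw_open {A : Type} (U : (A -> A) -> Prop) : Prop :=
  forall f, U f -> exists F : list A, forall h, agree_on F h f -> U h.

Definition pw_compact {A : Type} (K : (A -> A) -> Prop) : Prop :=
  forall (I : Type) (O : I -> (A -> A) -> Prop),
    (forall i, pw_open (O i)) ->
    (forall f, K f -> exists i, O i f) ->
    exists l : list I, forall f, K f -> exists i, In i l /\ O i f.

Definition generates {A : Type} (G K : (A -> A) -> Prop) : Prop :=
  (forall k, K k -> G k) /\
  (forall H, perm_group H -> (forall k, K k -> H k) -> forall g, G g -> H g).

Definition compactly_generated {A : Type} (G : (A -> A) -> Prop) : Prop :=
  exists K, pw_compact K /\ generates G K.

Fixpoint walk {V : Type} (E : V -> V -> Prop) (u : V) (p : list V) (v : V) : Prop :=
  match p with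
  | [] => u = v
  | w :: p' => E u w /\ walk E w p' v
  end.

Definition is_tree {V : Type} (E : V -> V -> Prop) : Prop :=
  (forall u v, E u v -> E v u) /\
  (forall u, ~ E u u) /\
  (forall u v, exists p, walk E u p v) /\
  (* no cycles: no list v0,...,vn (n >= 2) of distinct vertices with
     consecutive ones adjacent and vn adjacent to v0 *)
  (forall (v0 : V) (p : list V),
      NoDup (v0 :: p) -> 2 <= length p ->
      walk E v0 p (last p v0) -> ~ E (last p v0) v0).

(* inX describes the bipartition V_X (inX v = true) / V_Y (inX v = false) *)
Definition bipartition {V : Type} (E : V -> V -> Prop) (inX : V -> bool) : Prop :=
  forall u v, E u v -> inX u = negb (inX v).

(* legal colouring c : AT -> X ⊔ Y; the arc (u,v) gets colour c u v *)
Definition legal_colouring {V X Y : Type} (E : V -> V -> Prop) (inX : V -> bool)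
    (c : V -> V -> X + Y) : Prop :=
  (forall v, inX v = true ->
     (forall w, E v w -> exists x, c v w = inl x) /\
     (forall w w', E v w -> E v w' -> c v w = c v w' -> w = w') /\
     (forall x, exists w, E v w /\ c v w = inl x)) /\
  (forall v, inX v = false ->
     (forall w, E v w -> exists y, c v w = inr y) /\
     (forall w w', E v w -> E v w' -> c v w = c v w' -> w = w') /\
     (forall y, exists w, E v w /\ c v w = inr y)) /\
  (forall v u u', E u v -> E u' v -> c u v = c u' v).

Definition is_aut {V : Type} (E : V -> V -> Prop) (g : V -> V) : Prop :=
  is_perm g /\ (forall u v, E u v <-> E (g u) (g v)).

Definition U_c {V X Y : Type} (E : V -> V -> Prop) (inX : V -> bool)
    (c : V -> V -> X + Y) (M : (X -> X) -> Prop) (N : (Y -> Y) -> Prop)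
    (g : V -> V) : Prop :=
  is_aut E g /\
  (forall v, inX (g v) = inX v) /\
  (forall v, inX v = true ->
     exists s, M s /\
       forall w x, E v w -> c v w = inl x -> c (g v) (g w) = inl (s x)) /\
  (forall v, inX v = false ->
     exists s, N s /\
       forall w y, E v w -> c v w = inr y -> c (g v) (g w) = inr (s y)).

Definition VY {V : Type} (inX : V -> bool) : Type := { v : V | inX v = false }.

Definition box_product {V X Y : Type} (E : V -> V -> Prop) (inX : V -> bool)
    (c : V -> V -> X + Y) (M : (X -> X) -> Prop) (N : (Y -> Y) -> Prop)
    (h : VY inX -> VY inX) : Prop :=
  exists g, U_c E inX c M N g /\ forall y : VY inX, proj1_sig (h y) = g (proj1_sig y).

(* Fix a Y-vertex r.  Its stabiliser in U := U_c(M, N) has finite orbits: around a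
   Y-vertex the compact group N leaves finitely many possible images of each neighbour,
   and around an X-vertex, once the image of one neighbour is confined to a finite set,
   compactness of the point stabilisers of M confines the images of all the others.
   Since Y is finite (N is compact and transitive) and X is countable (M is transitive
   and compactly generated), the tree is countable, and a closed set of permutations
   with finite orbits of a countable set is compact (König's lemma).

   For compact generation, fix adjacent vertices x0 in V_X and y0 in V_Y, and take the
   stabiliser of y0 together with the automorphisms fixing x0 whose local action at x0
   lies in a compact generating set C of M; both sets are compact by the same argument.
   The group they generate contains every automorphism fixing x0, since the local actions
   at x0 all of whose realisations it contains form a group containing C.  Automorphisms
   with prescribed local actions exist, obtained by permuting the colours in the colour
   words along geodesics; with transitivity of M and N on colours they move y0 anywhere
   in V_Y within the generated group, which is therefore all of U.  Restriction to V_Y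
   is continuous and gives both statements for M ⊠ N. *)

From Stdlib Require Import List Lia Classical ClassicalEpsilon FunctionalExtensionality.
Import ListNotations.

(** * Permutation groups in the permutation topology *)

Lemma is_perm_inj {A : Type} (f : A -> A) : is_perm f -> forall a b, f a = f b -> a = b.
Proof. intros [g [Hg _]] a b e. now rewrite <- (Hg a), e, Hg. Qed.

Lemma perm_group_is_perm {A : Type} (G : (A -> A) -> Prop) :
  perm_group G -> forall g, G g -> is_perm g.
Proof. intros [H _]. exact H. Qed.

Lemma perm_group_id {A : Type} (G : (A -> A) -> Prop) : perm_group G -> G (fun x => x).
Proof. intros [_ [H _]]. exact H. Qed.

Lemma perm_group_comp {A : Type} (G : (A -> A) -> Prop) :
  perm_group G -> forall g h, G g -> G h -> G (fun x => g (h x)).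
Proof. intros [_ [_ [H _]]]. exact H. Qed.

Lemma perm_group_inv {A : Type} (G : (A -> A) -> Prop) : perm_group G -> forall g, G g ->
  exists h, G h /\ (forall x, h (g x) = x) /\ (forall x, g (h x) = x).
Proof. intros [_ [_ [_ H]]]. exact H. Qed.

Definition pw_closed {A : Type} (K : (A -> A) -> Prop) : Prop :=
  forall f, (forall F, exists k, K k /\ agree_on F k f) -> K f.

Section Compactness.
Context {A : Type}.

Lemma compact_orbit_finite (K : (A -> A) -> Prop) :
  pw_compact K -> forall a, exists L, forall k, K k -> In (k a) L.
Proof.
  intros HK a.
  destruct (HK A (fun b f => f a = b)) as [l Hl].
  - intros b f Hf. exists [a]. intros h Hh. rewrite Hh by now left. exact Hf.
  - intros f _. now exists (f a).
  - exists l. intros k Hk. destruct (Hl k Hk) as [i [Hi <-]]. exact Hi.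
Qed.

(* The complement of [f] is covered by the open sets [{h | h a <> f a}]. *)
Lemma compact_closed (K : (A -> A) -> Prop) : pw_compact K -> pw_closed K.
Proof.
  intros HK f Hf. apply NNPP. intro Hn.
  destruct (HK A (fun a h => h a <> f a)) as [l Hl].
  - intros a g Hg. exists [a]. intros h Hh. rewrite Hh by now left. exact Hg.
  - intros g Hg. apply NNPP. intro H. apply Hn.
    replace f with g; [exact Hg|].
    apply functional_extensionality. intro a. apply NNPP. intro H'. apply H. now exists a.
  - destruct (Hf l) as [k [Hk Hkf]]. destruct (Hl k Hk) as [i [Hi Hi']].
    exact (Hi' (Hkf i Hi)).
Qed.

Lemma compact_union (K1 K2 : (A -> A) -> Prop) :
  pw_compact K1 -> pw_compact K2 -> pw_compact (fun f => K1 f \/ K2 f).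
Proof.
  intros H1 H2 I O Ho Hc.
  destruct (H1 I O Ho) as [l1 Hl1]; [intros f Hf; apply Hc; now left|].
  destruct (H2 I O Ho) as [l2 Hl2]; [intros f Hf; apply Hc; now right|].
  exists (l1 ++ l2). intros f [Hf|Hf].
  - destruct (Hl1 f Hf) as [i [Hi Hi']]. exists i. split; [apply in_or_app; now left|exact Hi'].
  - destruct (Hl2 f Hf) as [i [Hi Hi']]. exists i. split; [apply in_or_app; now right|exact Hi'].
Qed.

Lemma compact_subsingleton (K : (A -> A) -> Prop) :
  (forall f g, K f -> K g -> f = g) -> pw_compact K.
Proof.
  intros Hs I O Ho Hc.
  destruct (classic (exists f, K f)) as [[f Hf]|Hn].
  - destruct (Hc f Hf) as [i Hi]. exists [i]. intros g Hg. exists i.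
    split; [now left|]. now rewrite (Hs g f Hg Hf).
  - exists []. intros g Hg. exfalso. apply Hn. now exists g.
Qed.

Lemma compact_ext (K1 K2 : (A -> A) -> Prop) :
  (forall f, K1 f <-> K2 f) -> pw_compact K1 -> pw_compact K2.
Proof.
  intros He H I O Ho Hc. destruct (H I O Ho) as [l Hl].
  - intros f Hf. apply Hc, He, Hf.
  - exists l. intros f Hf. apply Hl, He, Hf.
Qed.

End Compactness.

Lemma compact_image {A B : Type} (rho : (A -> A) -> (B -> B))
  (rho_continuous : forall g (L : list B), exists L' : list A,
     forall g', agree_on L' g' g -> agree_on L (rho g') (rho g))
  (K : (A -> A) -> Prop) :
  pw_compact K -> pw_compact (fun h => exists g, K g /\ h = rho g).
Proof.
  intros HK I O Ho Hc.
  destruct (HK I (fun i g => O i (rho g))) as [l Hl].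
  - intros i g Hg. destruct (Ho i (rho g) Hg) as [F HF].
    destruct (rho_continuous g F) as [L' HL']. exists L'. intros h Hh. apply HF, HL', Hh.
  - intros g Hg. apply Hc. now exists g.
  - exists l. intros h [g [Hg ->]]. apply Hl, Hg.
Qed.

(* Tychonoff for a product of finite discrete spaces, via König's lemma: the exhaustion
   [T] lets us extend, stage by stage, a finite partial assignment that no finite
   subfamily of the cover covers; the limit lies in [K] but is covered. *)
Section FiniteOrbitCompactness.
Context {A : Type} (K : (A -> A) -> Prop).
Hypothesis K_orbit : forall a, exists L, forall k, K k -> In (k a) L.
Hypothesis K_closed : pw_closed K.
Variable T : nat -> list A.
Hypothesis T_mono : forall n a, In a (T n) -> In a (T (S n)).
Hypothesis T_cover : forall a, exists n, In a (T n).

Lemma exhaustion_le n m a : n <= m -> In a (T n) -> In a (T m).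
Proof. intro H. induction H; auto. Qed.

Lemma exhaustion_list (F : list A) : exists n, forall a, In a F -> In a (T n).
Proof.
  induction F as [|a F [n Hn]]; [exists 0; intros a []|].
  destruct (T_cover a) as [m Hm]. exists (n + m).
  intros b [<-|Hb]; [apply (exhaustion_le m)|apply (exhaustion_le n)]; auto; lia.
Qed.

Variables (I : Type) (O : I -> (A -> A) -> Prop).
Hypothesis O_open : forall i, pw_open (O i).
Hypothesis O_cover : forall f, K f -> exists i, O i f.

Definition satisfies (s : list (A * A)) (f : A -> A) : Prop :=
  forall a b, In (a, b) s -> f a = b.

Definition uncovered (s : list (A * A)) : Prop :=
  ~ exists l : list I, forall f, K f -> satisfies s f -> exists i, In i l /\ O i f.

Lemma uncovered_inhabited s : uncovered s -> exists f, K f /\ satisfies s f.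
Proof.
  intro Hs. apply NNPP. intro H. apply Hs. exists []. intros f Hf Hsf.
  exfalso. apply H. now exists f.
Qed.

Lemma uncovered_extend s a : uncovered s -> exists b, uncovered (s ++ [(a, b)]).
Proof.
  intro Hs. apply NNPP. intro Hb. apply Hs.
  destruct (K_orbit a) as [L HL].
  assert (Hcov : forall L', exists l, forall f, K f -> satisfies s f -> In (f a) L' ->
            exists i, In i l /\ O i f).
  { induction L' as [|b L' [l' Hl']]; [exists []; intros f _ _ []|].
    assert (Hcb : ~ uncovered (s ++ [(a, b)])) by (intro H; apply Hb; now exists b).
    apply NNPP in Hcb. destruct Hcb as [lb Hlb].
    exists (lb ++ l'). intros f Hf Hsf [Hfa|Hfa].
    - destruct (Hlb f Hf) as [i [Hi Hi']].
      + intros a' b' Hab. apply in_app_or in Hab as [Hab|[Hab|[]]]; [now apply Hsf|].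
        now inversion Hab; subst.
      + exists i. split; [apply in_or_app; now left|exact Hi'].
    - destruct (Hl' f Hf Hsf Hfa) as [i [Hi Hi']].
      exists i. split; [apply in_or_app; now right|exact Hi']. }
  destruct (Hcov L) as [l Hl]. exists l. intros f Hf Hsf. apply Hl; auto.
Qed.

Definition extend_value (s : list (A * A)) (a : A) : A :=
  epsilon (inhabits a) (fun b => uncovered (s ++ [(a, b)])).

Fixpoint extend (s : list (A * A)) (l : list A) : list (A * A) :=
  match l with [] => s | a :: l' => extend (s ++ [(a, extend_value s a)]) l' end.

Lemma extend_uncovered l s : uncovered s -> uncovered (extend s l).
Proof.
  revert s. induction l as [|a l IH]; intros s Hs; simpl; [exact Hs|].
  apply IH, (epsilon_spec _ (fun b => uncovered (s ++ [(a, b)]))), uncovered_extend, Hs.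
Qed.

Lemma extend_prefix l s : exists t, extend s l = s ++ t.
Proof.
  revert s. induction l as [|a l IH]; intro s; simpl; [exists []; now rewrite app_nil_r|].
  destruct (IH (s ++ [(a, extend_value s a)])) as [t ->].
  exists ((a, extend_value s a) :: t). now rewrite <- app_assoc.
Qed.

Lemma extend_assigns l s a : In a l -> exists b, In (a, b) (extend s l).
Proof.
  revert s. induction l as [|a' l IH]; intros s Ha; [destruct Ha|].
  destruct Ha as [->|Ha]; [|now apply IH].
  simpl. destruct (extend_prefix l (s ++ [(a, extend_value s a)])) as [t ->].
  exists (extend_value s a). apply in_or_app. left. apply in_or_app. right. now left.
Qed.

Hypothesis nil_uncovered : uncovered [].

Fixpoint stage (n : nat) : list (A * A) :=
  match n with 0 => [] | S n' => extend (stage n') (T n') end.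

Lemma stage_uncovered n : uncovered (stage n).
Proof. induction n; [exact nil_uncovered|apply extend_uncovered; assumption]. Qed.

Lemma stage_prefix n m : n <= m -> exists t, stage m = stage n ++ t.
Proof.
  induction 1 as [|m _ [t Ht]]; [exists []; now rewrite app_nil_r|].
  simpl. destruct (extend_prefix (T m) (stage m)) as [t' ->].
  exists (t ++ t'). now rewrite Ht, app_assoc.
Qed.

Lemma stage_consistent n m a b b' : In (a, b) (stage n) -> In (a, b') (stage m) -> b = b'.
Proof.
  intros H1 H2.
  destruct (stage_prefix n (n + m) ltac:(lia)) as [t1 Ht1].
  destruct (stage_prefix m (n + m) ltac:(lia)) as [t2 Ht2].
  destruct (uncovered_inhabited _ (stage_uncovered (n + m))) as [k [_ Hk]].
  rewrite <- (Hk a b), <- (Hk a b'); auto.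
  - rewrite Ht2. apply in_or_app. now left.
  - rewrite Ht1. apply in_or_app. now left.
Qed.

Definition stage_limit (a : A) : A :=
  epsilon (inhabits a) (fun b => exists n, In (a, b) (stage n)).

Lemma stage_limit_agree F n k :
  (forall a, In a F -> In a (T n)) -> satisfies (stage (S n)) k -> agree_on F k stage_limit.
Proof.
  intros HF Hk a Ha. destruct (extend_assigns (T n) (stage n) a (HF a Ha)) as [b Hb].
  rewrite (Hk a b Hb).
  destruct (epsilon_spec (inhabits a) (fun b => exists n, In (a, b) (stage n)))
    as [m Hm]; [now exists b, (S n)|].
  exact (stage_consistent (S n) _ _ _ _ Hb Hm).
Qed.

Lemma stage_limit_in : K stage_limit.
Proof.
  apply K_closed. intro F. destruct (exhaustion_list F) as [n Hn].
  destruct (uncovered_inhabited _ (stage_uncovered (S n))) as [k [Hk Hks]].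
  exists k. split; [exact Hk|]. exact (stage_limit_agree F n k Hn Hks).
Qed.

Lemma nil_uncovered_false : False.
Proof.
  destruct (O_cover _ stage_limit_in) as [i Hi]. destruct (O_open i _ Hi) as [F HF].
  destruct (exhaustion_list F) as [n Hn]. apply (stage_uncovered (S n)).
  exists [i]. intros k _ Hks. exists i. split; [now left|].
  apply HF, (stage_limit_agree F n k Hn Hks).
Qed.

End FiniteOrbitCompactness.

Lemma compact_of_finite_orbits {A : Type} (K : (A -> A) -> Prop) (T : nat -> list A) :
  (forall a, exists L, forall k, K k -> In (k a) L) -> pw_closed K ->
  (forall n a, In a (T n) -> In a (T (S n))) -> (forall a, exists n, In a (T n)) ->
  pw_compact K.
Proof.
  intros Horb Hcl Hmono Hcov I O Ho Hc. apply NNPP. intro Hno.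
  apply (nil_uncovered_false K Horb Hcl T Hmono Hcov I O Ho Hc).
  intros [l Hl]. apply Hno. exists l. intros f Hf. apply Hl; [exact Hf|intros a b []].
Qed.

Lemma is_perm_of_bijective {A : Type} (f : A -> A) :
  (forall a b, f a = f b -> a = b) -> (forall b, exists a, f a = b) -> is_perm f.
Proof.
  intros Hinj Hsurj. exists (fun b => epsilon (inhabits b) (fun a => f a = b)). split.
  - intro a. apply Hinj, (epsilon_spec _ (fun a' => f a' = f a)). now exists a.
  - intro b. apply (epsilon_spec _ (fun a => f a = b)), Hsurj.
Qed.

(* Approximations of [s] are translated back into the stabiliser by a fixed element
   agreeing with [s] at [a]. *)
Lemma perm_group_closed_of_stab {A : Type} (G : (A -> A) -> Prop) (a : A) :
  perm_group G -> pw_closed (stab G a) -> pw_closed G.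
Proof.
  intros HG Hst s Hs. destruct (Hs [a]) as [m1 [Hm1 Ha1]].
  destruct (perm_group_inv G HG m1 Hm1) as [m1' [Hm1' [Hi1 Hi2]]].
  assert (Ht : stab G a (fun z => m1' (s z))).
  { apply Hst. intro F. destruct (Hs (a :: F)) as [m [Hm Ha]].
    exists (fun z => m1' (m z)). split; [split|].
    - apply perm_group_comp; assumption.
    - rewrite (Ha a (or_introl eq_refl)), <- (Ha1 a (or_introl eq_refl)). apply Hi1.
    - intros b Hb. simpl. rewrite Ha; [reflexivity|now right]. }
  replace s with (fun z => m1 (m1' (s z))) by (apply functional_extensionality; intro; apply Hi2).
  apply perm_group_comp; [exact HG|exact Hm1|exact (proj1 Ht)].
Qed.

(* The elements of [G] moving [a] into [Lb] lie in finitely many cosets of [stab G a]. *)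
Lemma stab_compact_orbit_finite {A : Type} (G : (A -> A) -> Prop) (a z : A) :
  perm_group G -> pw_compact (stab G a) ->
  forall Lb : list A, exists L, forall m, G m -> In (m a) Lb -> In (m z) L.
Proof.
  intros HG Hst. destruct (compact_orbit_finite _ Hst z) as [Ls HLs].
  induction Lb as [|b Lb [L HL]]; [exists []; intros m _ []|].
  destruct (classic (exists mb, G mb /\ mb a = b)) as [[mb [Hmb Hmba]]|Hn].
  - destruct (perm_group_inv G HG mb Hmb) as [mb' [Hmb' [Hi1 Hi2]]].
    exists (map mb Ls ++ L). intros m Hm [e|Hin]; apply in_or_app; [left|right; auto].
    rewrite <- (Hi2 (m z)). apply in_map, (HLs (fun q => mb' (m q))). split.
    + apply perm_group_comp; assumption.
    + simpl. now rewrite <- e, <- Hmba, Hi1.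
  - exists L. intros m Hm [e|Hin]; [|auto]. exfalso. apply Hn. now exists m.
Qed.

Lemma transitive_compact_finite {A : Type} (G : (A -> A) -> Prop) (a : A) :
  transitive G -> pw_compact G -> exists L, forall b : A, In b L.
Proof.
  intros Ht Hc. destruct (compact_orbit_finite G Hc a) as [L HL].
  exists L. intro b. destruct (Ht a b) as [g [Hg <-]]. exact (HL g Hg).
Qed.

(* The domain of a transitive group generated by a compact set [C] is exhausted by the
   balls around [a] in the Schreier graph of [C], which is locally finite because compact
   sets have finite orbits and finite preimages. *)
Section CompactGeneration.
Context {A : Type} (G C : (A -> A) -> Prop) (a : A).
Hypothesis G_group : perm_group G.
Hypothesis G_transitive : transitive G.
Hypothesis C_compact : pw_compact C.
Hypothesis C_generates : generates G C.

Lemma compact_preimages_finite z : exists L, forall k, C k -> forall b, k b = z -> In b L.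
Proof.
  assert (HCperm : forall k, C k -> is_perm k)
    by (intros k Hk; exact (perm_group_is_perm G G_group k (proj1 C_generates k Hk))).
  destruct (C_compact A (fun b h => h b = z)) as [l Hl].
  - intros b f Hf. exists [b]. intros h Hh. rewrite Hh by now left. exact Hf.
  - intros f Hf. destruct (HCperm f Hf) as [f' [_ H2]]. exists (f' z). apply H2.
  - exists l. intros k Hk b Hb. destruct (Hl k Hk) as [i [Hi Hi']].
    now rewrite (is_perm_inj k (HCperm k Hk) b i (eq_trans Hb (eq_sym Hi'))).
Qed.

Definition schreier_neighbours (b : A) : list A :=
  epsilon (inhabits []) (fun L => forall k, C k -> In (k b) L) ++
  epsilon (inhabits []) (fun L => forall k, C k -> forall b', k b' = b -> In b' L).

Lemma schreier_neighbours_spec b k : C k ->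
  In (k b) (schreier_neighbours b) /\ forall b', k b' = b -> In b' (schreier_neighbours b).
Proof.
  intro Hk. split; [|intros b' Hb']; apply in_or_app; [left|right].
  - exact (epsilon_spec _ (fun L => forall k, C k -> In (k b) L)
             (compact_orbit_finite C C_compact b) k Hk).
  - exact (epsilon_spec _ (fun L => forall k, C k -> forall b', k b' = b -> In b' L)
             (compact_preimages_finite b) k Hk b' Hb').
Qed.

Fixpoint schreier_ball (n : nat) : list A :=
  match n with
  | 0 => [a]
  | S n' => schreier_ball n' ++ flat_map schreier_neighbours (schreier_ball n')
  end.

Lemma schreier_ball_mono n b : In b (schreier_ball n) -> In b (schreier_ball (S n)).
Proof. intro H. apply in_or_app. now left. Qed.

(* The permutations preserving the union of the balls form a group containing [C]. *)
Lemma schreier_ball_cover b : exists n, In b (schreier_ball n).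
Proof.
  set (R := fun z => exists n, In z (schreier_ball n)).
  set (H := fun g : A -> A =>
    is_perm g /\ (forall z, R z -> R (g z)) /\ (forall z, R (g z) -> R z)).
  assert (HH : perm_group H).
  { split; [|split; [|split]].
    - intros g Hg; apply Hg.
    - split; [exists (fun x => x); split; reflexivity|split; auto].
    - intros g h [[g' [Hg1 Hg2]] [Hg3 Hg4]] [[h' [Hh1 Hh2]] [Hh3 Hh4]]. split; [|split; auto].
      exists (fun x => h' (g' x)). split; intro; now rewrite ?Hg1, ?Hh1, ?Hh2, ?Hg2.
    - intros g [[g' [Hg1 Hg2]] [Hg3 Hg4]]. exists g'. split; [split; [|split]|split; assumption].
      + exists g. auto.
      + intros z Hz. apply Hg4. now rewrite Hg2.
      + intros z Hz. rewrite <- (Hg2 z). apply Hg3, Hz. }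
  assert (HCH : forall k, C k -> H k).
  { intros k Hk. split; [exact (perm_group_is_perm G G_group k (proj1 C_generates k Hk))|split].
    - intros z [n Hn]. exists (S n). apply in_or_app. right. apply in_flat_map.
      exists z. split; [exact Hn|exact (proj1 (schreier_neighbours_spec z k Hk))].
    - intros z [n Hn]. exists (S n). apply in_or_app. right. apply in_flat_map.
      exists (k z). split; [exact Hn|].
      exact (proj2 (schreier_neighbours_spec (k z) k Hk) z eq_refl). }
  destruct (G_transitive a b) as [m [Hm <-]].
  destruct (proj2 C_generates H HH HCH m Hm) as [_ [HR _]]. apply HR. exists 0. now left.
Qed.

End CompactGeneration.

(** * Reduced walks in trees *)

Lemma last_cons_default {T : Type} (v : T) p d d' : last (v :: p) d = last (v :: p) d'.
Proof. revert v. induction p as [|w p IH]; intro v; [reflexivity|]. exact (IH w). Qed.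

Lemma last_cons_self {T : Type} (a : T) p : last (a :: p) a = last p a.
Proof. now destruct p. Qed.

Lemma in_last {T : Type} (w : T) p d : In (last (w :: p) d) (w :: p).
Proof.
  revert w. induction p as [|v p IH]; intro w; [now left|]. right. exact (IH v).
Qed.

Lemma last_map {T U : Type} (f : T -> U) p a : f (last p a) = last (map f p) (f a).
Proof.
  revert a. induction p as [|w p IH]; intro a; [reflexivity|].
  destruct p as [|v p]; [reflexivity|]. exact (IH a).
Qed.

Lemma rev_head {T : Type} (l : list T) y B d : rev l = y :: B -> y = last l d.
Proof.
  intro e. destruct l as [|x l] using rev_ind; [discriminate|].
  rewrite rev_app_distr in e. injection e as ->. now rewrite last_last.
Qed.

Definition reduced {T : Type} (l : list T) : Prop :=
  forall l1 l2 x y, l <> l1 ++ x :: y :: x :: l2.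

Section Reduced.
Context {T : Type}.

Lemma reduced_app_l (l1 l2 : list T) : reduced (l1 ++ l2) -> reduced l1.
Proof. intros H m1 m2 x y e. apply (H m1 (m2 ++ l2) x y). now rewrite e, <- app_assoc. Qed.

Lemma reduced_app_r (l1 l2 : list T) : reduced (l1 ++ l2) -> reduced l2.
Proof. intros H m1 m2 x y e. apply (H (l1 ++ m1) m2 x y). now rewrite e, <- app_assoc. Qed.

Lemma reduced_tail (x : T) t : reduced (x :: t) -> reduced t.
Proof. exact (reduced_app_r [x] t). Qed.

Lemma reduced_no_return (x y z : T) t : reduced (x :: y :: z :: t) -> x <> z.
Proof. intros H ->. exact (H [] t z y eq_refl). Qed.

Lemma reduced_cons (x : T) t :
  reduced t -> (forall y z t', t = y :: z :: t' -> x <> z) -> reduced (x :: t).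
Proof.
  intros H1 H2 [|u l1] l2 a b e; injection e as -> e.
  - exact (H2 b a l2 e eq_refl).
  - exact (H1 l1 l2 a b e).
Qed.

Lemma reduced_single (a : T) : reduced [a].
Proof. intros [|? [|? ?]] l2 x y e; discriminate. Qed.

Lemma reduced_rev (l : list T) : reduced l -> reduced (rev l).
Proof.
  intros H l1 l2 x y e. apply (H (rev l2) (rev l1) x y).
  rewrite <- (rev_involutive l), e, rev_app_distr. simpl.
  now repeat rewrite <- app_assoc.
Qed.

Lemma reduced_join (A : list T) b B : reduced (A ++ [b]) -> reduced (b :: B) ->
  (forall A' x y B', A = A' ++ [x] -> B = y :: B' -> x <> y) -> reduced (A ++ b :: B).
Proof.
  revert b B. induction A as [|x A IH]; intros b B H1 H2 H3; [exact H2|].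
  apply reduced_cons.
  - apply IH; [exact (reduced_tail x _ H1)|exact H2|].
    intros A' x' y' B' e1 e2. apply (H3 (x :: A') x' y' B'); [now rewrite e1|exact e2].
  - intros y z t' e. destruct A as [|y' [|w A3]]; simpl in e; injection e.
    + intros e' _. exact (H3 [] x z t' eq_refl e').
    + intros _ <- _. exact (reduced_no_return x y' b [] H1).
    + intros _ <- _. exact (reduced_no_return x y' w (A3 ++ [b]) H1).
Qed.

End Reduced.

Lemma reduced_map_inv {T U : Type} (f : T -> U) l : reduced (map f l) -> reduced l.
Proof.
  intros H l1 l2 x y e. apply (H (map f l1) (map f l2) (f x) (f y)).
  now rewrite e, map_app.
Qed.

Lemma reduced_map {T U : Type} (f : T -> U) l :
  (forall l1 l2 x y z, l = l1 ++ x :: y :: z :: l2 -> f x = f z -> x = z) ->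
  reduced l -> reduced (map f l).
Proof.
  intros Hf H m1 m2 a b e.
  apply map_eq_app in e as [l1 [l' [-> [<- e]]]].
  apply map_eq_cons in e as [x [t1 [-> [<- e]]]].
  apply map_eq_cons in e as [y [t2 [-> [<- e]]]].
  apply map_eq_cons in e as [z [t3 [-> [Hxz <-]]]].
  assert (x = z) as <- by exact (Hf l1 t3 x y z eq_refl (eq_sym Hxz)).
  exact (H l1 t3 x y eq_refl).
Qed.

Section Chains.
Context {V : Type} (E : V -> V -> Prop).

Fixpoint chain (l : list V) : Prop :=
  match l with
  | x :: ((y :: _) as t) => E x y /\ chain t
  | _ => True
  end.

Lemma walk_iff a p b : walk E a p b <-> chain (a :: p) /\ last p a = b.
Proof.
  revert a. induction p as [|w p IH]; intro a; simpl; [tauto|].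
  rewrite IH. destruct p as [|v p]; [simpl; tauto|].
  change (last (w :: v :: p) a) with (last (v :: p) a).
  rewrite (last_cons_default v p a w). simpl chain. tauto.
Qed.

Lemma chain_app_l l1 l2 : chain (l1 ++ l2) -> chain l1.
Proof.
  induction l1 as [|x l1 IH]; simpl; auto.
  destruct l1 as [|y l1]; auto. intros [H1 H2]. split; auto.
Qed.

Lemma chain_app_r l1 l2 : chain (l1 ++ l2) -> chain l2.
Proof.
  induction l1 as [|x l1 IH]; simpl; auto.
  destruct l1 as [|y l1]; simpl; [destruct l2; tauto|].
  intros [_ H]. exact (IH H).
Qed.

Lemma chain_mid l1 x y l2 : chain (l1 ++ x :: y :: l2) -> E x y.
Proof. intro H. apply chain_app_r in H. simpl in H. tauto. Qed.

Lemma chain_last (a : V) p z : chain (a :: p ++ [z]) -> E (last p a) z.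
Proof.
  intro H. destruct (exists_last (l := a :: p) ltac:(discriminate)) as [l [q eq]].
  assert (q = last p a) as <- by now rewrite <- last_cons_self, eq, last_last.
  change (chain ((a :: p) ++ [z])) in H.
  rewrite eq, <- app_assoc in H. exact (chain_mid l q z [] H).
Qed.

Lemma chain_join A b B : chain (A ++ [b]) -> chain (b :: B) -> chain (A ++ b :: B).
Proof.
  induction A as [|x A IH]; simpl; auto.
  destruct A as [|y A]; simpl.
  - intros [H1 _] H2. split; auto.
  - intros [H1 H2] H3. split; auto. apply IH; auto.
Qed.

Lemma chain_rev l : (forall u v, E u v -> E v u) -> chain l -> chain (rev l).
Proof.
  intro Hs. induction l as [|x l IH]; simpl; auto.
  destruct l as [|y l]; simpl; auto. intros [H1 H2]. specialize (IH H2). simpl in IH.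
  rewrite <- app_assoc. apply chain_join; [exact IH|]. simpl. auto.
Qed.

End Chains.

Section Trees.
Context {V : Type} (E : V -> V -> Prop).
Hypothesis E_tree : is_tree E.

Lemma tree_sym u v : E u v -> E v u.
Proof. apply E_tree. Qed.

Lemma tree_irrefl u : ~ E u u.
Proof. apply E_tree. Qed.

(* A repeated vertex in a reduced walk would close a cycle of length at least three. *)
Lemma reduced_chain_nodup p a : chain E (a :: p) -> reduced (a :: p) -> NoDup (a :: p).
Proof.
  revert a. induction p as [|w p IH]; intros a Hc Hr; [repeat constructor; intros []|].
  destruct Hc as [Haw Hc].
  assert (ND : NoDup (w :: p)) by exact (IH w Hc (reduced_tail a _ Hr)).
  constructor; [|exact ND]. intros [->|Hin]; [exact (tree_irrefl a Haw)|].
  apply in_split in Hin as [[|q1 q] [r ->]]; [exact (Hr [] r a w eq_refl)|].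
  destruct E_tree as [_ [_ [_ Hcyc]]].
  destruct (exists_last (l := w :: q1 :: q) ltac:(discriminate)) as [l [z ez]].
  apply (Hcyc a (w :: q1 :: q)).
  - constructor; [|exact (NoDup_app_remove_r (w :: q1 :: q) (a :: r) ND)].
    intro Hin. apply (NoDup_remove_2 (w :: q1 :: q) r a ND), in_or_app. now left.
  - simpl. lia.
  - apply walk_iff. split; [|reflexivity].
    exact (chain_app_l E (a :: w :: q1 :: q) (a :: r) (conj Haw Hc)).
  - rewrite ez, last_last. apply (chain_mid E (a :: l) z a r).
    replace ((a :: l) ++ z :: a :: r) with (a :: (l ++ [z]) ++ a :: r)
      by now rewrite <- app_assoc.
    rewrite <- ez. exact (conj Haw Hc).
Qed.

Lemma reduced_walk_exists a b : exists p, chain E (a :: p) /\ reduced (a :: p) /\ last p a = b.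
Proof.
  destruct E_tree as [_ [_ [Hconn _]]]. destruct (Hconn a b) as [p Hp].
  revert a Hp. induction p as [|w p IH]; intros a Hp.
  - exists []. split; [exact I|split; [apply reduced_single|exact Hp]].
  - destruct Hp as [Haw Hp]. destruct (IH w Hp) as [[|z q] [Hc [Hr Hl]]].
    + exists [w]. split; [split; [exact Haw|exact I]|split; [|exact Hl]].
      apply reduced_cons; [apply reduced_single|intros ? ? ? e; discriminate].
    + destruct (classic (z = a)) as [->|Hza].
      * exists q. split; [exact (proj2 Hc)|split; [exact (reduced_tail w _ Hr)|]].
        now rewrite <- Hl, last_cons_default with (d' := a), last_cons_self.
      * exists (w :: z :: q). split; [split; assumption|split].
        2:{ change (last (z :: q) a = b). now rewrite last_cons_default with (d' := w). }
        apply reduced_cons; [exact Hr|]. intros y z' t' e. injection e as -> -> ->.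
        intros ->. exact (Hza eq_refl).
Qed.

Lemma reduced_walk_return a w p : chain E (a :: w :: p) -> reduced (a :: w :: p) ->
  last (w :: p) a <> a.
Proof.
  intros Hc Hr Hl. apply (NoDup_remove_2 [] _ a (reduced_chain_nodup _ _ Hc Hr)).
  rewrite <- Hl at 1. apply in_last.
Qed.

(* If the walks leave [a] along different edges, reversing one and gluing it to the other
   at [a] gives a reduced walk from their common endpoint back to itself. *)
Lemma reduced_walk_unique p q a : chain E (a :: p) -> chain E (a :: q) ->
  reduced (a :: p) -> reduced (a :: q) -> last p a = last q a -> p = q.
Proof.
  revert a q. induction p as [|w p IH]; intros a [|w' q] Hcp Hcq Hrp Hrq Hl; try reflexivity.
  - exfalso. exact (reduced_walk_return a w' q Hcq Hrq (eq_sym Hl)).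
  - exfalso. exact (reduced_walk_return a w p Hcp Hrp Hl).
  - destruct (classic (w = w')) as [<-|Hww'].
    + f_equal. apply (IH w q (proj2 Hcp) (proj2 Hcq) (reduced_tail a _ Hrp) (reduced_tail a _ Hrq)).
      rewrite <- (last_cons_self w p), <- (last_cons_self w q).
      now rewrite (last_cons_default w p w a), (last_cons_default w q w a).
    + exfalso.
      assert (Hglue : chain E (rev (w :: p) ++ a :: w' :: q) /\
                      reduced (rev (w :: p) ++ a :: w' :: q)).
      { split.
        - apply chain_join; [|exact Hcq].
          change (chain E (rev (a :: w :: p))). apply chain_rev; [exact tree_sym|exact Hcp].
        - apply reduced_join; [|exact Hrq|].
          { change (reduced (rev (a :: w :: p))). apply reduced_rev, Hrp. }
          intros A' x y B' eA eB. injection eB as <- _.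
          change (rev p ++ [w] = A' ++ [x]) in eA.
          apply app_inj_tail in eA as [_ <-]. exact Hww'. }
      destruct (rev (w :: p)) as [|c A] eqn:eA.
      { now apply (f_equal (@rev V)) in eA; rewrite rev_involutive in eA. }
      destruct Hglue as [Hc Hr].
      apply (NoDup_remove_2 [] _ c (reduced_chain_nodup _ _ Hc Hr)).
      simpl. apply in_or_app. right. right.
      rewrite (rev_head _ c A a eA), Hl. apply in_last.
Qed.

Lemma tree_surjective (f : V -> V) :
  (forall u b, E (f u) b -> exists u', f u' = b) -> forall t, exists u, f u = t.
Proof.
  intros Hnb t. destruct E_tree as [_ [_ [Hconn _]]]. destruct (Hconn (f t) t) as [p Hp].
  assert (Hwalk : forall q a, (exists u, f u = a) -> walk E a q t -> exists u, f u = t).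
  { induction q as [|b q IH]; intros a [u <-] Hw; [now exists u|].
    destruct Hw as [Hab Hw]. exact (IH b (Hnb u b Hab) Hw). }
  exact (Hwalk p (f t) (ex_intro _ t eq_refl) Hp).
Qed.

End Trees.

(** * Legal colourings and relabelling *)

Definition on_side {X Y : Type} (b : bool) (l : X + Y) : Prop :=
  match l with inl _ => b = true | inr _ => b = false end.

Definition sum_map {X Y : Type} (f : X -> X) (g : Y -> Y) (l : X + Y) : X + Y :=
  match l with inl x => inl (f x) | inr y => inr (g y) end.

Lemma sum_map_on_side {X Y : Type} (f : X -> X) (g : Y -> Y) b l :
  on_side b l -> on_side b (sum_map f g l).
Proof. now destruct l. Qed.

Lemma sum_map_inj {X Y : Type} (f : X -> X) (g : Y -> Y) :
  (forall a b, f a = f b -> a = b) -> (forall a b, g a = g b -> a = b) ->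
  forall l l', sum_map f g l = sum_map f g l' -> l = l'.
Proof.
  intros Hf Hg [a|a] [b|b] e; simpl in e; try discriminate; injection e as e; f_equal; auto.
Qed.

Section Colouring.
Context {X Y V : Type} (E : V -> V -> Prop) (inX : V -> bool) (c : V -> V -> X + Y).
Hypothesis E_tree : is_tree E.
Hypothesis E_bip : bipartition E inX.
Hypothesis c_legal : legal_colouring E inX c.
(* Only used to know that [X] and [Y] are inhabited, so that every vertex has neighbours. *)
Variables (x1 : X) (y1 : Y).

Lemma has_in_neighbour w : exists u, E u w.
Proof.
  destruct c_legal as [HX [HY _]]. destruct (inX w) eqn:e.
  - destruct (proj2 (proj2 (HX w e)) x1) as [u [Hu _]]. exists u. exact (tree_sym E E_tree _ _ Hu).
  - destruct (proj2 (proj2 (HY w e)) y1) as [u [Hu _]]. exists u. exact (tree_sym E E_tree _ _ Hu).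
Qed.

(* A legal colouring is constant on the arcs ending at a vertex, so every vertex carries
   a well-defined incoming colour. *)
Definition incolour (w : V) : X + Y := c (epsilon (inhabits w) (fun u => E u w)) w.

Lemma incolour_arc v w : E v w -> c v w = incolour w.
Proof.
  intro H. apply (proj2 (proj2 c_legal) w v); [exact H|].
  apply (epsilon_spec _ (fun u => E u w)), has_in_neighbour.
Qed.

Lemma incolour_on_side v w : E v w -> on_side (inX v) (incolour w).
Proof.
  intro H. rewrite <- (incolour_arc v w H). destruct c_legal as [HX [HY _]].
  destruct (inX v) eqn:e.
  - destruct (proj1 (HX v e) w H) as [x ->]. reflexivity.
  - destruct (proj1 (HY v e) w H) as [y ->]. reflexivity.
Qed.

Lemma incolour_on_side_self w : on_side (negb (inX w)) (incolour w).
Proof.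
  destruct (has_in_neighbour w) as [u Hu].
  rewrite <- (E_bip _ _ Hu). exact (incolour_on_side u w Hu).
Qed.

Lemma incolour_inj v w w' : E v w -> E v w' -> incolour w = incolour w' -> w = w'.
Proof.
  intros H H' e. rewrite <- (incolour_arc v w H), <- (incolour_arc v w' H') in e.
  destruct c_legal as [HX [HY _]]. destruct (inX v) eqn:ev.
  - exact (proj1 (proj2 (HX v ev)) w w' H H' e).
  - exact (proj1 (proj2 (HY v ev)) w w' H H' e).
Qed.

Definition neighbour (v : V) (l : X + Y) : V :=
  epsilon (inhabits v) (fun w => E v w /\ incolour w = l).

Lemma neighbour_spec v l : on_side (inX v) l -> E v (neighbour v l) /\ incolour (neighbour v l) = l.
Proof.
  intro Hs. apply (epsilon_spec _ (fun w => E v w /\ incolour w = l)).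
  destruct c_legal as [HX [HY _]]. destruct l as [x|y]; simpl in Hs.
  - destruct (proj2 (proj2 (HX v Hs)) x) as [w [Hw e]].
    exists w. split; [exact Hw|]. now rewrite <- (incolour_arc v w Hw).
  - destruct (proj2 (proj2 (HY v Hs)) y) as [w [Hw e]].
    exists w. split; [exact Hw|]. now rewrite <- (incolour_arc v w Hw).
Qed.

Lemma neighbour_incolour v w : E v w -> neighbour v (incolour w) = w.
Proof.
  intro H. destruct (neighbour_spec v (incolour w) (incolour_on_side v w H)) as [H1 H2].
  exact (incolour_inj v _ _ H1 H H2).
Qed.

Fixpoint follow (s : V) (ls : list (X + Y)) : list V :=
  match ls with [] => [] | l :: ls' => neighbour s l :: follow (neighbour s l) ls' end.

Fixpoint alternating (b : bool) (ls : list (X + Y)) : Prop :=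
  match ls with [] => True | l :: ls' => on_side b l /\ alternating (negb b) ls' end.

Lemma follow_incolours s p : chain E (s :: p) -> follow s (map incolour p) = p.
Proof.
  revert s. induction p as [|w p IH]; intros s H; [reflexivity|].
  destruct H as [H1 H2]. simpl. rewrite (neighbour_incolour s w H1). f_equal. exact (IH w H2).
Qed.

Lemma chain_alternating s p : chain E (s :: p) -> alternating (inX s) (map incolour p).
Proof.
  revert s. induction p as [|w p IH]; intros s H; [exact I|].
  destruct H as [H1 H2]. split; [exact (incolour_on_side s w H1)|].
  rewrite (E_bip s w H1), Bool.negb_involutive. exact (IH w H2).
Qed.

Lemma alternating_sum_map f g b ls : alternating b ls -> alternating b (map (sum_map f g) ls).
Proof.
  revert b. induction ls as [|l ls IH]; intros b H; [exact I|].
  destruct H. split; [apply sum_map_on_side|apply IH]; assumption.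
Qed.

Lemma follow_chain s ls : alternating (inX s) ls ->
  chain E (s :: follow s ls) /\ map incolour (follow s ls) = ls.
Proof.
  revert s. induction ls as [|l ls IH]; intros s H; [split; reflexivity|].
  destruct H as [H1 H2]. destruct (neighbour_spec s l H1) as [Ha Hb].
  rewrite (E_bip _ _ Ha), Bool.negb_involutive in H2.
  destruct (IH _ H2) as [IH1 IH2]. split.
  - simpl. destruct (follow (neighbour s l) ls); split; auto.
  - simpl. now rewrite Hb, IH2.
Qed.

Lemma follow_app s ls1 ls2 :
  follow s (ls1 ++ ls2) = follow s ls1 ++ follow (last (follow s ls1) s) ls2.
Proof.
  revert s. induction ls1 as [|l ls1 IH]; intro s; [reflexivity|].
  simpl. rewrite IH. do 3 f_equal.
  destruct (follow (neighbour s l) ls1); [reflexivity|apply last_cons_default].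
Qed.

Lemma reduced_incolours l : chain E l -> reduced l -> reduced (map incolour l).
Proof.
  intros Hc Hr. apply reduced_map; [|exact Hr]. intros l1 l2 x y z -> Hl.
  destruct (chain_app_r E l1 _ Hc) as [H1 [H2 _]].
  exact (incolour_inj y x z (tree_sym E E_tree _ _ H1) H2 Hl).
Qed.

(* Fixing a root [r], a vertex is determined by the colour word read along its geodesic
   from [r]; permuting colours in these words relabels the tree. *)
Section Relabel.
Variable r : V.

Definition geodesic (u : V) : list V :=
  epsilon (inhabits []) (fun p => chain E (r :: p) /\ reduced (r :: p) /\ last p r = u).

Lemma geodesic_spec u :
  chain E (r :: geodesic u) /\ reduced (r :: geodesic u) /\ last (geodesic u) r = u.
Proof.
  apply (epsilon_spec _ (fun p => chain E (r :: p) /\ reduced (r :: p) /\ last p r = u)).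
  exact (reduced_walk_exists E E_tree r u).
Qed.

Lemma geodesic_unique u p : chain E (r :: p) -> reduced (r :: p) -> last p r = u -> geodesic u = p.
Proof.
  intros H1 H2 H3. destruct (geodesic_spec u) as [H4 [H5 H6]].
  apply (reduced_walk_unique E E_tree _ _ r); auto. congruence.
Qed.

Lemma geodesic_root : geodesic r = [].
Proof. apply geodesic_unique; [exact I|apply reduced_single|reflexivity]. Qed.

Lemma geodesic_neighbour u w : E u w ->
  geodesic w = geodesic u ++ [w] \/ geodesic u = geodesic w ++ [u].
Proof.
  intro Huw. destruct (geodesic_spec u) as [Hc [Hr Hl]].
  destruct (geodesic u) as [|u' p0 IHp] eqn:ep using rev_ind.
  - left. simpl in Hl. subst u. apply geodesic_unique; [split; [exact Huw|exact I]| |reflexivity].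
    apply reduced_cons; [apply reduced_single|intros ? ? ? e; discriminate].
  - clear IHp. rewrite last_last in Hl. subst u'.
    change (chain E ((r :: p0) ++ [u])) in Hc. change (reduced ((r :: p0) ++ [u])) in Hr.
    destruct (classic (last p0 r = w)) as [Hw|Hw].
    + right. f_equal. symmetry. apply geodesic_unique;
        [exact (chain_app_l E _ _ Hc)|exact (reduced_app_l _ _ Hr)|exact Hw].
    + left. rewrite <- app_assoc. apply geodesic_unique.
      * apply (chain_join E (r :: p0)); [exact Hc|split; [exact Huw|exact I]].
      * apply (reduced_join (r :: p0)); [exact Hr|apply reduced_cons; [apply reduced_single|]|].
        -- intros ? ? ? e; discriminate.
        -- intros A' x y B' eA eB. injection eB as <- _. intros ->. apply Hw.
           rewrite <- last_cons_self, eA. apply last_last.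
      * now rewrite app_assoc, last_last.
Qed.

Definition address (u : V) : list (X + Y) := map incolour (geodesic u).

Lemma incolour_address u : incolour u = last (address u) (incolour r).
Proof. unfold address. rewrite <- last_map. f_equal. symmetry. apply geodesic_spec. Qed.

Section Colourmap.
Variables (f : X -> X) (g : Y -> Y).
Hypothesis f_inj : forall a b, f a = f b -> a = b.
Hypothesis g_inj : forall a b, g a = g b -> a = b.
Hypothesis fixes_root : sum_map f g (incolour r) = incolour r.

Definition relabel_walk (u : V) : list V := follow r (map (sum_map f g) (address u)).

Definition relabel (u : V) : V := last (relabel_walk u) r.

Lemma relabel_walk_chain u :
  chain E (r :: relabel_walk u) /\ map incolour (relabel_walk u) = map (sum_map f g) (address u).
Proof. apply follow_chain, alternating_sum_map, chain_alternating, geodesic_spec. Qed.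

Lemma relabel_walk_reduced u : reduced (r :: relabel_walk u).
Proof.
  apply (reduced_map_inv incolour). simpl. rewrite (proj2 (relabel_walk_chain u)), <- fixes_root.
  change (reduced (map (sum_map f g) (map incolour (r :: geodesic u)))).
  apply reduced_map.
  - intros l1 l2 x y z _. apply sum_map_inj; assumption.
  - apply reduced_incolours; apply geodesic_spec.
Qed.

Lemma geodesic_relabel u : geodesic (relabel u) = relabel_walk u.
Proof.
  apply geodesic_unique; [apply relabel_walk_chain|apply relabel_walk_reduced|reflexivity].
Qed.

Lemma address_relabel u : address (relabel u) = map (sum_map f g) (address u).
Proof. unfold address at 1. rewrite geodesic_relabel. apply relabel_walk_chain. Qed.

Lemma relabel_root : relabel r = r.
Proof. unfold relabel, relabel_walk, address. now rewrite geodesic_root. Qed.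

Lemma incolour_relabel u : incolour (relabel u) = sum_map f g (incolour u).
Proof.
  rewrite (incolour_address (relabel u)), address_relabel, (incolour_address u).
  now rewrite (last_map (sum_map f g)), fixes_root.
Qed.

Lemma inX_relabel u : inX (relabel u) = inX u.
Proof.
  pose proof (incolour_on_side_self (relabel u)) as H1. pose proof (incolour_on_side_self u) as H2.
  rewrite incolour_relabel in H1.
  destruct (incolour u); simpl in *; destruct (inX (relabel u)), (inX u); simpl in *; congruence.
Qed.

Lemma relabel_adj u w : E u w -> E (relabel u) (relabel w).
Proof.
  assert (Hstep : forall u w, geodesic w = geodesic u ++ [w] -> E (relabel u) (relabel w)).
  { clear u w. intros u w e.
    destruct (relabel_walk_chain w) as [Hc _].
    unfold relabel at 2. unfold relabel_walk, address in *. rewrite e in *. rewrite !map_app in *.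
    rewrite follow_app in *. cbn [follow map] in *. rewrite last_last.
    exact (chain_last E r _ _ Hc). }
  intro H. destruct (geodesic_neighbour u w H) as [e|e]; [exact (Hstep u w e)|].
  exact (tree_sym E E_tree _ _ (Hstep w u e)).
Qed.

End Colourmap.

Lemma relabel_inv f g f' g' :
  (forall a b, f a = f b -> a = b) -> (forall a b, g a = g b -> a = b) ->
  sum_map f g (incolour r) = incolour r -> (forall x, f' (f x) = x) -> (forall y, g' (g y) = y) ->
  forall u, relabel f' g' (relabel f g u) = u.
Proof.
  intros Hfi Hgi Hfx Hf Hg u. unfold relabel at 1, relabel_walk.
  rewrite address_relabel by assumption.
  rewrite map_map.
  replace (map (fun l => sum_map f' g' (sum_map f g l)) (address u)) with (address u).
  - unfold address. rewrite follow_incolours by apply geodesic_spec. apply geodesic_spec.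
  - rewrite <- map_id at 1. apply map_ext. intros [a|a]; simpl; now rewrite ?Hf, ?Hg.
Qed.

Lemma relabel_automorphism f g : is_perm f -> is_perm g -> sum_map f g (incolour r) = incolour r ->
  exists h, is_aut E h /\ h r = r /\ (forall u, inX (h u) = inX u) /\
    (forall u, incolour (h u) = sum_map f g (incolour u)).
Proof.
  intros Hf Hg Hfx. pose proof (is_perm_inj f Hf) as Hfi. pose proof (is_perm_inj g Hg) as Hgi.
  destruct Hf as [f' [Hf1 Hf2]], Hg as [g' [Hg1 Hg2]].
  assert (Hfi' : forall a b, f' a = f' b -> a = b) by (intros a b e; now rewrite <- (Hf2 a), e).
  assert (Hgi' : forall a b, g' a = g' b -> a = b) by (intros a b e; now rewrite <- (Hg2 a), e).
  assert (Hfx' : sum_map f' g' (incolour r) = incolour r).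
  { rewrite <- Hfx at 1. destruct (incolour r); simpl; now rewrite ?Hf1, ?Hg1. }
  exists (relabel f g). split; [split|split; [|split]].
  - exists (relabel f' g'). split; intro; apply relabel_inv; auto.
  - intros u v. split; [apply relabel_adj; auto|]. intro H.
    rewrite <- (relabel_inv f g f' g' Hfi Hgi Hfx Hf1 Hg1 u),
            <- (relabel_inv f g f' g' Hfi Hgi Hfx Hf1 Hg1 v).
    apply relabel_adj; auto.
  - apply relabel_root.
  - apply inX_relabel; auto.
  - apply incolour_relabel; auto.
Qed.

End Relabel.

(** * The group [U_c M N] *)

(* The local condition defining [U_c M N] at [v], read on incoming colours. *)
Definition acts_locally {Z : Type} (P : (Z -> Z) -> Prop) (inj : Z -> X + Y)
    (g : V -> V) (v : V) : Prop :=
  exists s, P s /\ forall w z, E v w -> incolour w = inj z -> incolour (g w) = inj (s z).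

Section LocalAction.
Context {Z : Type} (P : (Z -> Z) -> Prop) (inj : Z -> X + Y).
Hypothesis P_group : perm_group P.
Hypothesis inj_inj : forall a b, inj a = inj b -> a = b.

Lemma acts_locally_iff g v : (forall u w, E u w -> E (g u) (g w)) ->
  (exists s, P s /\ forall w z, E v w -> c v w = inj z -> c (g v) (g w) = inj (s z)) <->
  acts_locally P inj g v.
Proof.
  intro Hadj. split; intros [s [Hs Hloc]]; exists s; split; auto; intros w z Hw Hz.
  - rewrite <- (incolour_arc _ _ (Hadj v w Hw)).
    apply Hloc; [exact Hw|now rewrite incolour_arc].
  - rewrite (incolour_arc _ _ (Hadj v w Hw)).
    apply Hloc; [exact Hw|now rewrite <- (incolour_arc v w)].
Qed.

Lemma acts_locally_comp g h v : (forall u w, E u w -> E (h u) (h w)) ->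
  acts_locally P inj g (h v) -> acts_locally P inj h v -> acts_locally P inj (fun u => g (h u)) v.
Proof.
  intros Hadj [s2 [Hs2 H2]] [s1 [Hs1 H1]]. exists (fun z => s2 (s1 z)).
  split; [apply perm_group_comp; assumption|].
  intros w z Hw Hz. apply H2; [exact (Hadj v w Hw)|exact (H1 w z Hw Hz)].
Qed.

Lemma acts_locally_inv g h v : (forall u, g (h u) = u) -> (forall u w, E u w -> E (h u) (h w)) ->
  (forall u, E (h v) u -> exists z, incolour u = inj z) ->
  acts_locally P inj g (h v) -> acts_locally P inj h v.
Proof.
  intros Hgh Hadj Hside [s [Hs Hloc]].
  destruct (perm_group_inv P P_group s Hs) as [s' [Hs' [Hs1 _]]].
  exists s'. split; [exact Hs'|]. intros w z Hw Hz.
  destruct (Hside (h w) (Hadj v w Hw)) as [z' Hz'].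
  pose proof (Hloc (h w) z' (Hadj v w Hw) Hz') as e. rewrite Hgh, Hz in e.
  rewrite Hz', (inj_inj _ _ e), Hs1. reflexivity.
Qed.

Section Neighbours.
Variables (v : V) (nb : Z -> V).
Hypothesis nb_spec : forall z, E v (nb z) /\ incolour (nb z) = inj z.

Lemma eq_nb_of_incolour w z : E v w -> incolour w = inj z -> w = nb z.
Proof.
  intros Hw Hz. apply (incolour_inj v); [exact Hw|apply nb_spec|].
  now rewrite Hz, (proj2 (nb_spec z)).
Qed.

(* The local action of a limit [f] is read off from the colours of the images of the
   neighbours [nb z]; it is a limit of local actions of approximations of [f]. *)
Lemma acts_locally_closed f : pw_closed P ->
  (forall F, exists g, acts_locally P inj g v /\ agree_on F g f) -> acts_locally P inj f v.
Proof.
  intros P_closed Hf.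
  set (s := fun z => epsilon (inhabits z) (fun z' => incolour (f (nb z)) = inj z')).
  assert (Hs : forall g sg z, agree_on [nb z] g f -> P sg ->
             (forall w z, E v w -> incolour w = inj z -> incolour (g w) = inj (sg z)) ->
             incolour (f (nb z)) = inj (sg z) /\ sg z = s z).
  { intros g sg z Hagree Hsg Hloc.
    assert (e : incolour (f (nb z)) = inj (sg z)).
    { rewrite <- (Hagree (nb z)) by now left. apply Hloc; apply nb_spec. }
    split; [exact e|]. apply inj_inj. rewrite <- e.
    exact (epsilon_spec _ (fun z' => incolour (f (nb z)) = inj z') (ex_intro _ (sg z) e)). }
  exists s. split.
  - apply P_closed. intro F. destruct (Hf (map nb F)) as [g [[sg [Hsg Hloc]] Hagree]].
    exists sg. split; [exact Hsg|]. intros z Hz.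
    apply (Hs g sg z); auto. intros u [<-|[]]. apply Hagree, in_map, Hz.
  - intros w z Hw Hz. rewrite (eq_nb_of_incolour w z Hw Hz).
    destruct (Hf [nb z]) as [g [[sg [Hsg Hloc]] Hagree]].
    destruct (Hs g sg z Hagree Hsg Hloc) as [-> ->]. reflexivity.
Qed.

Lemma acts_locally_onto f b z : (forall u w, E u w -> E (f u) (f w)) ->
  acts_locally P inj f v -> E (f v) b -> incolour b = inj z -> exists u, f u = b.
Proof.
  intros Hadj [s [Hs Hloc]] Hb Hz.
  destruct (perm_group_inv P P_group s Hs) as [s' [_ [_ Hs2]]].
  exists (nb (s' z)). destruct (nb_spec (s' z)) as [Hn1 Hn2].
  apply (incolour_inj (f v)); [exact (Hadj _ _ Hn1)|exact Hb|].
  now rewrite (Hloc _ _ Hn1 Hn2), Hs2.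
Qed.

End Neighbours.

End LocalAction.

Lemma neighbour_inl_spec v : inX v = true ->
  forall x, E v (neighbour v (inl x)) /\ incolour (neighbour v (inl x)) = inl x.
Proof. intros Hv x. apply neighbour_spec. exact Hv. Qed.

Lemma neighbour_inr_spec v : inX v = false ->
  forall y, E v (neighbour v (inr y)) /\ incolour (neighbour v (inr y)) = inr y.
Proof. intros Hv y. apply neighbour_spec. exact Hv. Qed.

Lemma incolour_inl v u : inX v = true -> E v u -> exists x, incolour u = inl x.
Proof.
  intros Hv Hu. pose proof (incolour_on_side v u Hu) as Hs. rewrite Hv in Hs.
  destruct (incolour u) as [x|]; [now exists x|discriminate].
Qed.

Lemma incolour_inr v u : inX v = false -> E v u -> exists y, incolour u = inr y.
Proof.
  intros Hv Hu. pose proof (incolour_on_side v u Hu) as Hs. rewrite Hv in Hs.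
  destruct (incolour u) as [|y]; [discriminate|now exists y].
Qed.

Variables (M : (X -> X) -> Prop) (N : (Y -> Y) -> Prop).
Hypothesis M_group : perm_group M.
Hypothesis N_group : perm_group N.

Local Notation U := (U_c E inX c M N).

Definition U_local (g : V -> V) : Prop :=
  is_aut E g /\ (forall v, inX (g v) = inX v) /\
  (forall v, inX v = true -> acts_locally M inl g v) /\
  (forall v, inX v = false -> acts_locally N inr g v).

Lemma U_iff g : U g <-> U_local g.
Proof.
  unfold U_c, U_local. split; intros [Ha [Hi [HX HY]]]; (split; [exact Ha|split; [exact Hi|]]);
    pose proof (fun u w => proj1 (proj2 Ha u w)) as Hadj;
    split; intros v Hv; apply (acts_locally_iff _ _ g v Hadj); auto.
Qed.

Lemma U_adj g u w : U g -> E u w -> E (g u) (g w).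
Proof. intros [[_ Ha] _]. apply Ha. Qed.

Lemma U_inX g v : U g -> inX (g v) = inX v.
Proof. intros [_ [Hi _]]. apply Hi. Qed.

Lemma U_id : U (fun v => v).
Proof.
  apply U_iff. split; [split; [exists (fun v => v); auto|tauto]|split; [reflexivity|split]];
    intros v _; [exists (fun x => x)|exists (fun y => y)];
    split; auto; apply perm_group_id; assumption.
Qed.

Lemma U_comp g h : U g -> U h -> U (fun v => g (h v)).
Proof.
  rewrite !U_iff.
  intros [[[g' [Hg1 Hg2]] Hga] [Hgi [HgX HgY]]] [[[h' [Hh1 Hh2]] Hha] [Hhi [HhX HhY]]].
  assert (Hhadj : forall u w, E u w -> E (h u) (h w)) by (intros u w; apply Hha).
  split; [split|split; [|split]].
  - exists (fun v => h' (g' v)). split; intro; now rewrite ?Hg1, ?Hh1, ?Hh2, ?Hg2.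
  - intros u v. rewrite (Hha u v). apply Hga.
  - intro v. now rewrite Hgi.
  - intros v Hv. apply acts_locally_comp; auto. apply HgX. now rewrite Hhi.
  - intros v Hv. apply acts_locally_comp; auto. apply HgY. now rewrite Hhi.
Qed.

Lemma U_inv g : U g -> exists h, U h /\ (forall v, h (g v) = v) /\ (forall v, g (h v) = v).
Proof.
  intro Hg. pose proof Hg as Hg'. rewrite U_iff in Hg'.
  destruct Hg' as [[[h [H1 H2]] Ha] [Hi [HX HY]]].
  exists h. split; [|split; assumption].
  assert (Hha : forall u v, E u v <-> E (h u) (h v)).
  { intros u v. rewrite (Ha (h u) (h v)), !H2. tauto. }
  assert (Hhi : forall v, inX (h v) = inX v) by (intro v; now rewrite <- (Hi (h v)), H2).
  assert (Hhadj : forall u w, E u w -> E (h u) (h w)) by (intros u w; apply Hha).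
  apply U_iff. split; [split; [exists g; split; assumption|exact Hha]|split; [exact Hhi|split]].
  - intros v Hv. apply (acts_locally_inv M inl M_group) with (g := g); auto.
    + intros a b e. now injection e.
    + intros u Hu. apply (incolour_inl (h v)); [now rewrite Hhi|exact Hu].
    + apply HX. now rewrite Hhi.
  - intros v Hv. apply (acts_locally_inv N inr N_group) with (g := g); auto.
    + intros a b e. now injection e.
    + intros u Hu. apply (incolour_inr (h v)); [now rewrite Hhi|exact Hu].
    + apply HY. now rewrite Hhi.
Qed.

Lemma U_closed : pw_closed M -> pw_closed N -> pw_closed U.
Proof.
  intros M_closed N_closed f Hf.
  assert (Happrox : forall F, exists g, U_local g /\ agree_on F g f).
  { intro F. destruct (Hf F) as [g [Hg Ha]]. exists g. now rewrite <- U_iff. }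
  assert (Hadj : forall u w, E u w <-> E (f u) (f w)).
  { intros u w. destruct (Hf [u; w]) as [g [Hg Ha]].
    rewrite <- (Ha u), <- (Ha w) by (simpl; auto). apply (proj2 (proj1 Hg)). }
  assert (Hfadj : forall u w, E u w -> E (f u) (f w)) by (intros u w; apply Hadj).
  assert (Hinj : forall u w, f u = f w -> u = w).
  { intros u w e. destruct (Hf [u; w]) as [g [[[Hperm _] _] Ha]].
    rewrite <- (Ha u), <- (Ha w) in e by (simpl; auto). exact (is_perm_inj g Hperm u w e). }
  assert (Hi : forall v, inX (f v) = inX v).
  { intro v. destruct (Hf [v]) as [g [Hg Ha]]. rewrite <- (Ha v) by now left. apply Hg. }
  assert (HX : forall v, inX v = true -> acts_locally M inl f v).
  { intros v Hv. apply (acts_locally_closed M inl) with (nb := fun x => neighbour v (inl x)).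
    - intros a b e. now injection e.
    - exact (neighbour_inl_spec v Hv).
    - exact M_closed.
    - intro F. destruct (Happrox F) as [g [[_ [_ [HgX _]]] Ha]]. exists g. auto. }
  assert (HY : forall v, inX v = false -> acts_locally N inr f v).
  { intros v Hv. apply (acts_locally_closed N inr) with (nb := fun y => neighbour v (inr y)).
    - intros a b e. now injection e.
    - exact (neighbour_inr_spec v Hv).
    - exact N_closed.
    - intro F. destruct (Happrox F) as [g [[_ [_ [_ HgY]]] Ha]]. exists g. auto. }
  assert (Hsurj : forall t, exists u, f u = t).
  { apply (tree_surjective E E_tree). intros u b Hb.
    destruct (inX u) eqn:eu.
    - destruct (incolour_inl (f u) b) as [x Hx]; [now rewrite Hi|exact Hb|].
      exact (acts_locally_onto M inl M_group u _ (neighbour_inl_spec u eu) f b x Hfadj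
               (HX u eu) Hb Hx).
    - destruct (incolour_inr (f u) b) as [y Hy]; [now rewrite Hi|exact Hb|].
      exact (acts_locally_onto N inr N_group u _ (neighbour_inr_spec u eu) f b y Hfadj
               (HY u eu) Hb Hy). }
  apply U_iff. split; [split; [exact (is_perm_of_bijective f Hinj Hsurj)|exact Hadj]|auto].
Qed.

Lemma U_lift r f g : M f -> N g -> sum_map f g (incolour r) = incolour r ->
  exists h, U h /\ h r = r /\ forall w, incolour (h w) = sum_map f g (incolour w).
Proof.
  intros Hf Hg Hfx.
  destruct (relabel_automorphism r f g (perm_group_is_perm M M_group f Hf)
              (perm_group_is_perm N N_group g Hg) Hfx) as [h [Ha [Hr [Hi Hl]]]].
  exists h. split; [|split; assumption].
  apply U_iff. split; [exact Ha|split; [exact Hi|split]].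
  - intros v _. exists f. split; [exact Hf|]. intros w x _ e. now rewrite Hl, e.
  - intros v _. exists g. split; [exact Hg|]. intros w y _ e. now rewrite Hl, e.
Qed.

(** * Compact point stabilisers *)

Hypothesis M_stab_compact : forall x, pw_compact (stab M x).
Hypothesis N_compact : pw_compact N.
(* [Y] is finite as [N] is compact and transitive. *)
Variable LY : list Y.
Hypothesis LY_cover : forall y, In y LY.

Lemma U_is_closed : pw_closed U.
Proof.
  apply U_closed; [|exact (compact_closed N N_compact)].
  exact (perm_group_closed_of_stab M x1 M_group (compact_closed _ (M_stab_compact x1))).
Qed.

Definition finite_orbit (S : (V -> V) -> Prop) (u : V) : Prop :=
  exists L, forall g, S g -> In (g u) L.

Section FiniteOrbits.
Variable S : (V -> V) -> Prop.
Hypothesis S_sub : forall g, S g -> U g.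

Lemma finite_orbit_Y_step p u : inX p = false -> finite_orbit S p -> E p u -> finite_orbit S u.
Proof.
  intros Hp [Lp HLp] Hu.
  exists (flat_map (fun p' => map (fun y => neighbour p' (inr y)) LY) Lp).
  intros g Hg. apply in_flat_map. exists (g p). split; [exact (HLp g Hg)|].
  assert (Hgu : E (g p) (g u)) by exact (U_adj g p u (S_sub g Hg) Hu).
  destruct (incolour_inr (g p) (g u)) as [y Hy]; [now rewrite U_inX by auto|exact Hgu|].
  apply in_map_iff. exists y. split; [|apply LY_cover].
  rewrite <- Hy. exact (neighbour_incolour _ _ Hgu).
Qed.

(* The local actions of [S] at [p] move the colour of [q] within a finite set, hence, by
   compactness of the stabilisers in [M], every colour. *)
Lemma finite_orbit_X_step p q u : inX p = true -> finite_orbit S p -> finite_orbit S q ->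
  E p q -> E p u -> finite_orbit S u.
Proof.
  intros Hp [Lp HLp] [Lq HLq] Hq Hu.
  destruct (incolour_inl p q Hp Hq) as [a Ha]. destruct (incolour_inl p u Hp Hu) as [z Hz].
  set (Lb := flat_map (fun q' => match incolour q' with inl x => [x] | inr _ => [] end) Lq).
  destruct (stab_compact_orbit_finite M a z M_group (M_stab_compact a) Lb) as [L HL].
  exists (flat_map (fun p' => map (fun x => neighbour p' (inl x)) L) Lp).
  intros g Hg. apply in_flat_map. exists (g p). split; [exact (HLp g Hg)|].
  pose proof (S_sub g Hg) as HgU. apply U_iff in HgU. destruct HgU as [_ [_ [HX _]]].
  destruct (HX p Hp) as [s [Hs Hloc]].
  apply in_map_iff. exists (s z). split.
  - rewrite <- (Hloc u z Hu Hz). apply neighbour_incolour, U_adj; auto.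
  - apply HL; [exact Hs|]. apply in_flat_map. exists (g q). split; [exact (HLq g Hg)|].
    rewrite (Hloc q a Hq Ha). now left.
Qed.

Lemma finite_orbit_walk p a b t : E a b -> finite_orbit S a -> finite_orbit S b ->
  walk E b p t -> finite_orbit S t.
Proof.
  revert a b. induction p as [|w p IH]; intros a b Hab Ha Hb Hw; [now rewrite <- Hw|].
  destruct Hw as [Hbw Hw]. apply (IH b w Hbw Hb); [|exact Hw].
  destruct (inX b) eqn:e.
  - exact (finite_orbit_X_step b a w e Hb Ha (tree_sym E E_tree _ _ Hab) Hbw).
  - exact (finite_orbit_Y_step b w e Hb Hbw).
Qed.

Lemma finite_orbit_all r : finite_orbit S r -> (forall u, E r u -> finite_orbit S u) ->
  forall t, finite_orbit S t.
Proof.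
  intros Hr Hn t. destruct E_tree as [_ [_ [Hconn _]]].
  destruct (Hconn r t) as [[|b p] Hp]; [now rewrite <- Hp|].
  destruct Hp as [Hrb Hp]. exact (finite_orbit_walk p r b t Hrb Hr (Hn b Hrb) Hp).
Qed.

End FiniteOrbits.

(* An exhaustion of [X], which exists as [M] is transitive and compactly generated. *)
Variable TX : nat -> list X.
Hypothesis TX_mono : forall n x, In x (TX n) -> In x (TX (S n)).
Hypothesis TX_cover : forall x, exists n, In x (TX n).

Fixpoint vertex_ball (r : V) (n : nat) : list V :=
  match n with
  | 0 => [r]
  | S n' => vertex_ball r n' ++
      flat_map (fun u => map (fun x => neighbour u (inl x)) (TX n') ++
                         map (fun y => neighbour u (inr y)) LY) (vertex_ball r n')
  end.

Lemma vertex_ball_mono r n u : In u (vertex_ball r n) -> In u (vertex_ball r (S n)).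
Proof. intro H. apply in_or_app. now left. Qed.

Lemma vertex_ball_cover r t : exists n, In t (vertex_ball r n).
Proof.
  destruct E_tree as [_ [_ [Hconn _]]]. destruct (Hconn r t) as [p Hp].
  assert (Hwalk : forall q a, (exists n, In a (vertex_ball r n)) -> walk E a q t ->
             exists n, In t (vertex_ball r n)).
  { induction q as [|b q IH]; intros a [n Hn] Hw; [rewrite <- Hw; now exists n|].
    destruct Hw as [Hab Hw]. apply (IH b); [|exact Hw].
    rewrite <- (neighbour_incolour a b Hab). destruct (incolour b) as [x|y].
    - destruct (TX_cover x) as [j Hj]. exists (S (n + j)). apply in_or_app. right.
      apply in_flat_map. exists a.
      split; [apply (exhaustion_le (vertex_ball r) (vertex_ball_mono r) n); [lia|exact Hn]|].
      apply in_or_app. left. apply in_map_iff. exists x. split; [reflexivity|].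
      apply (exhaustion_le TX TX_mono j); [lia|exact Hj].
    - exists (S n). apply in_or_app. right. apply in_flat_map. exists a. split; [exact Hn|].
      apply in_or_app. right. apply in_map_iff. exists y. split; [reflexivity|apply LY_cover]. }
  apply (Hwalk p r); [exists 0; now left|exact Hp].
Qed.

Lemma U_stab_compact r : inX r = false -> pw_compact (fun g => U g /\ g r = r).
Proof.
  intro Hr. apply (compact_of_finite_orbits _ (vertex_ball r)).
  - apply (finite_orbit_all _ (fun g Hg => proj1 Hg) r).
    + exists [r]. intros g [_ ->]. now left.
    + intros u Hu. apply (finite_orbit_Y_step _ (fun g Hg => proj1 Hg) r u Hr); [|exact Hu].
      exists [r]. intros g [_ ->]. now left.
  - intros f Hf. split.
    + apply U_is_closed. intro F. destruct (Hf F) as [k [[Hk _] Ha]]. now exists k.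
    + destruct (Hf [r]) as [k [[_ Hk] Ha]]. rewrite <- (Ha r) by now left. exact Hk.
  - apply vertex_ball_mono.
  - apply vertex_ball_cover.
Qed.

Variable C : (X -> X) -> Prop.
Hypothesis C_compact : pw_compact C.

Definition stab_by (x0 : V) (g : V -> V) : Prop :=
  U g /\ g x0 = x0 /\ acts_locally C inl g x0.

Lemma stab_by_compact x0 : inX x0 = true -> pw_compact (stab_by x0).
Proof.
  intro Hx0. apply (compact_of_finite_orbits _ (vertex_ball x0)).
  - apply (finite_orbit_all _ (fun g Hg => proj1 Hg) x0).
    { exists [x0]. intros g [_ [-> _]]. now left. }
    intros u Hu. destruct (incolour_inl x0 u Hx0 Hu) as [z Hz].
    destruct (compact_orbit_finite C C_compact z) as [L HL].
    exists (map (fun x => neighbour x0 (inl x)) L). intros g [Hg [Hg0 [s [Hs Hloc]]]].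
    apply in_map_iff. exists (s z). split; [|exact (HL s Hs)].
    rewrite <- (Hloc u z Hu Hz). apply neighbour_incolour.
    rewrite <- Hg0 at 1. exact (U_adj g _ _ Hg Hu).
  - intros f Hf. split; [|split].
    + apply U_is_closed. intro F. destruct (Hf F) as [k [[Hk _] Ha]]. now exists k.
    + destruct (Hf [x0]) as [k [[_ [Hk _]] Ha]]. rewrite <- (Ha x0) by now left. exact Hk.
    + apply (acts_locally_closed C inl) with (nb := fun x => neighbour x0 (inl x)).
      * intros a b e. now injection e.
      * exact (neighbour_inl_spec x0 Hx0).
      * exact (compact_closed C C_compact).
      * intro F. destruct (Hf F) as [k [[_ [_ Hk]] Ha]]. now exists k.
  - apply vertex_ball_mono.
  - apply vertex_ball_cover.
Qed.

Definition restrict (g : V -> V) (y : VY inX) : VY inX :=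
  match Bool.bool_dec (inX (g (proj1_sig y))) false with
  | left e => exist _ (g (proj1_sig y)) e
  | right _ => y  (* never taken when [g] preserves the bipartition *)
  end.

Lemma VY_eq (a b : VY inX) : proj1_sig a = proj1_sig b -> a = b.
Proof.
  destruct a as [a Ha], b as [b Hb]. simpl. intros <-. f_equal.
  apply Eqdep_dec.UIP_dec, Bool.bool_dec.
Qed.

Lemma restrict_val g y : U g -> proj1_sig (restrict g y) = g (proj1_sig y).
Proof.
  intro Hg. unfold restrict. destruct (Bool.bool_dec _ false) as [e|n]; [reflexivity|].
  exfalso. apply n. rewrite (U_inX g _ Hg). exact (proj2_sig y).
Qed.

Lemma box_product_iff h : box_product E inX c M N h <-> exists g, U g /\ h = restrict g.
Proof.
  split; intros [g [Hg Hh]]; exists g; split; auto.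
  - apply functional_extensionality. intro y. apply VY_eq. now rewrite restrict_val.
  - intro y. rewrite Hh. now apply restrict_val.
Qed.

Lemma restrict_comp g h : U g -> U h ->
  restrict (fun v => g (h v)) = (fun y => restrict g (restrict h y)).
Proof.
  intros Hg Hh. apply functional_extensionality. intro y. apply VY_eq.
  rewrite !restrict_val; auto. apply U_comp; assumption.
Qed.

Lemma restrict_inv g g' : U g -> U g' -> (forall v, g' (g v) = v) ->
  forall y, restrict g' (restrict g y) = y.
Proof.
  intros Hg Hg' Hinv y. apply VY_eq. rewrite !restrict_val; auto.
Qed.

Lemma restrict_continuous g (L : list (VY inX)) : exists L' : list V,
  forall g', agree_on L' g' g -> agree_on L (restrict g') (restrict g).
Proof.
  exists (map (@proj1_sig _ _) L). intros g' Hg y Hy.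
  unfold restrict. rewrite Hg; [reflexivity|]. apply in_map, Hy.
Qed.

Lemma box_product_stab_compact y : pw_compact (stab (box_product E inX c M N) y).
Proof.
  apply (compact_ext (fun h => exists g, (U g /\ g (proj1_sig y) = proj1_sig y) /\ h = restrict g)).
  - intro h. split.
    + intros [g [[Hg Hgy] ->]]. split; [apply box_product_iff; now exists g|].
      apply VY_eq. now rewrite restrict_val.
    + intros [Hb Hhy]. apply box_product_iff in Hb as [g [Hg ->]]. exists g.
      split; [split; [exact Hg|]|reflexivity]. now rewrite <- (restrict_val g y Hg), Hhy.
  - apply compact_image; [exact restrict_continuous|]. apply U_stab_compact, (proj2_sig y).
Qed.

(** * Compact generation *)

Hypothesis M_transitive : transitive M.
Hypothesis N_transitive : transitive N.

Lemma U_stab_transitive_on_neighbours v a b : E v a -> E v b ->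
  exists p, U p /\ p v = v /\ p a = b.
Proof.
  intros Ha Hb. pose proof (incolour_on_side_self v) as Hv.
  destruct (inX v) eqn:ev.
  - destruct (incolour_inl v a ev Ha) as [xa Hxa]. destruct (incolour_inl v b ev Hb) as [xb Hxb].
    destruct (M_transitive xa xb) as [s [Hs Hsab]].
    destruct (U_lift v s (fun y => y) Hs (perm_group_id N N_group)) as [p [Hp [Hpv Hpl]]].
    { destruct (incolour v); [discriminate|reflexivity]. }
    exists p. split; [exact Hp|split; [exact Hpv|]].
    apply (incolour_inj v); [rewrite <- Hpv at 1; exact (U_adj p v a Hp Ha)|exact Hb|].
    now rewrite Hpl, Hxa, Hxb, <- Hsab.
  - destruct (incolour_inr v a ev Ha) as [ya Hya]. destruct (incolour_inr v b ev Hb) as [yb Hyb].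
    destruct (N_transitive ya yb) as [t [Ht Htab]].
    destruct (U_lift v (fun x => x) t (perm_group_id M M_group) Ht) as [p [Hp [Hpv Hpl]]].
    { destruct (incolour v); [reflexivity|discriminate]. }
    exists p. split; [exact Hp|split; [exact Hpv|]].
    apply (incolour_inj v); [rewrite <- Hpv at 1; exact (U_adj p v a Hp Ha)|exact Hb|].
    now rewrite Hpl, Hya, Hyb, <- Htab.
Qed.

Hypothesis C_generates : generates M C.

Section Generation.
Variables (y0 x0 : V).
Hypothesis y0_side : inX y0 = false.
Hypothesis x0_side : inX x0 = true.
Hypothesis x0_y0 : E x0 y0.

Definition generators (h : VY inX -> VY inX) : Prop :=
  exists g, ((U g /\ g y0 = y0) \/ stab_by x0 g) /\ h = restrict g.

Variable H : (VY inX -> VY inX) -> Prop.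
Hypothesis H_group : perm_group H.
Hypothesis H_generators : forall h, generators h -> H h.

Lemma H_stab_y0 g : U g -> g y0 = y0 -> H (restrict g).
Proof. intros Hg Hy. apply H_generators. exists g. auto. Qed.

Lemma H_comp g h : U g -> U h -> H (restrict g) -> H (restrict h) ->
  H (restrict (fun v => g (h v))).
Proof. intros Hg Hh Hrg Hrh. rewrite restrict_comp by assumption. now apply perm_group_comp. Qed.

Lemma H_inv g g' : U g -> U g' -> (forall v, g' (g v) = v) -> (forall v, g (g' v) = v) ->
  H (restrict g') -> H (restrict g).
Proof.
  intros Hg Hg' H1 H2 Hr. destruct (perm_group_inv H H_group _ Hr) as [k [Hk [K1 _]]].
  replace (restrict g) with k; [exact Hk|].
  apply functional_extensionality. intro y.
  rewrite <- (restrict_inv g g' Hg Hg' H1 y) at 1. apply K1.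
Qed.

Definition nb0 (x : X) : V := neighbour x0 (inl x).

Definition induces (g : V -> V) (m : X -> X) : Prop := forall x, g (nb0 x) = nb0 (m x).

Lemma induces_of_incolour g m : U g -> g x0 = x0 -> (forall x, incolour (g (nb0 x)) = inl (m x)) ->
  induces g m.
Proof.
  intros Hg H0 Hl x. unfold nb0 at 2. rewrite <- Hl. symmetry. apply neighbour_incolour.
  rewrite <- H0 at 1. apply (U_adj g _ _ Hg), (neighbour_inl_spec x0 x0_side x).
Qed.

Lemma induces_of_acts_locally g s : U g -> g x0 = x0 ->
  (forall w x, E x0 w -> incolour w = inl x -> incolour (g w) = inl (s x)) -> induces g s.
Proof.
  intros Hg H0 Hloc. apply induces_of_incolour; auto.
  intro x. apply Hloc; apply (neighbour_inl_spec x0 x0_side x).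
Qed.

(* A group containing [C], hence all of [M]. *)
Definition realised_in_H (m : X -> X) : Prop :=
  M m /\ forall g, U g -> g x0 = x0 -> induces g m -> H (restrict g).

Lemma lift_induces m : M m -> exists g, U g /\ g x0 = x0 /\ induces g m.
Proof.
  intro Hm. destruct (U_lift x0 m (fun y => y) Hm (perm_group_id N N_group)) as [g [Hg [H0 Hl]]].
  - pose proof (incolour_on_side_self x0) as Hs. rewrite x0_side in Hs.
    destruct (incolour x0); [discriminate|reflexivity].
  - exists g. split; [exact Hg|split; [exact H0|]]. apply induces_of_incolour; auto.
    intro x. rewrite Hl. unfold nb0. now rewrite (proj2 (neighbour_inl_spec x0 x0_side x)).
Qed.

Lemma realised_in_H_group : perm_group realised_in_H.
Proof.
  split; [|split; [|split]].
  - intros m [Hm _]. exact (perm_group_is_perm M M_group m Hm).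
  - split; [apply perm_group_id, M_group|]. intros g Hg H0 HF. apply H_stab_y0; [exact Hg|].
    destruct (incolour_inl x0 y0 x0_side x0_y0) as [x Hx].
    assert (e : y0 = nb0 x)
      by (unfold nb0; rewrite <- Hx; symmetry; apply neighbour_incolour, x0_y0).
    rewrite e. exact (HF x).
  - intros m1 m2 [Hm1 Hm1'] [Hm2 Hm2']. split; [apply perm_group_comp; assumption|].
    intros g Hg H0 HF. destruct (lift_induces m2 Hm2) as [g2 [Hg2 [H2 HF2]]].
    destruct (U_inv g2 Hg2) as [g2' [Hg2' [I1 I2]]].
    destruct (perm_group_inv M M_group m2 Hm2) as [m2' [_ [J1 J2]]].
    assert (H0' : g2' x0 = x0) by (rewrite <- H2 at 1; apply I1).
    replace g with (fun v => (fun v => g (g2' v)) (g2 v))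
      by (apply functional_extensionality; intro v; now rewrite I1).
    apply (H_comp (fun v => g (g2' v)) g2);
      [apply U_comp; assumption|exact Hg2| |exact (Hm2' g2 Hg2 H2 HF2)].
    apply Hm1'; [apply U_comp; assumption|now rewrite H0', H0|].
    intro x. rewrite <- (J2 x) at 1. now rewrite <- HF2, I1, HF, J2.
  - intros m [Hm Hm']. destruct (perm_group_inv M M_group m Hm) as [m' [Hm'M [J1 J2]]].
    exists m'. split; [split; [exact Hm'M|]|split; assumption].
    intros g Hg H0 HF. destruct (U_inv g Hg) as [g' [Hg' [I1 I2]]].
    apply (H_inv g g'); auto. apply Hm'; [exact Hg'|rewrite <- H0 at 1; apply I1|].
    intro x. rewrite <- (J1 x) at 1. now rewrite <- HF, I1.
Qed.

Lemma H_stab_x0 g : U g -> g x0 = x0 -> H (restrict g).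
Proof.
  intros Hg H0. pose proof Hg as HgU. apply U_iff in HgU. destruct HgU as [_ [_ [HX _]]].
  destruct (HX x0 x0_side) as [s [Hs Hloc]].
  assert (Hreal : realised_in_H s).
  { apply (proj2 C_generates _ realised_in_H_group); [|exact Hs].
    intros k Hk. split; [exact (proj1 C_generates k Hk)|]. intros g' Hg' H0' HF.
    apply H_generators. exists g'. split; [right|reflexivity].
    split; [exact Hg'|split; [exact H0'|]]. exists k. split; [exact Hk|].
    intros w x Hw Hx. rewrite <- (neighbour_incolour x0 w Hw), Hx.
    fold (nb0 x). rewrite HF. unfold nb0. apply (neighbour_inl_spec x0 x0_side). }
  apply (proj2 Hreal g Hg H0). exact (induces_of_acts_locally g s Hg H0 Hloc).
Qed.

Definition reached (t : V) : Prop := exists g, U g /\ H (restrict g) /\ g y0 = t.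

Lemma reached_distance_two x t : E y0 x -> E x t -> reached t.
Proof.
  intros Hx Ht.
  destruct (U_stab_transitive_on_neighbours y0 x0 x (tree_sym E E_tree _ _ x0_y0) Hx)
    as [p [Hp [Hpy Hpx]]].
  destruct (U_inv p Hp) as [p' [Hp' [P1 P2]]].
  assert (Ht' : E x0 (p' t)) by (rewrite <- (P1 x0), Hpx; exact (U_adj p' _ _ Hp' Ht)).
  destruct (U_stab_transitive_on_neighbours x0 y0 (p' t) x0_y0 Ht') as [q [Hq [Hqx Hqy]]].
  exists (fun v => p (q v)). split; [apply U_comp; assumption|split].
  - apply H_comp; [exact Hp|exact Hq|exact (H_stab_y0 p Hp Hpy)|exact (H_stab_x0 q Hq Hqx)].
  - now rewrite Hqy, P2.
Qed.

Lemma reached_step t x t' : reached t -> E t x -> E x t' -> reached t'.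
Proof.
  intros [g [Hg [Hgh Hgt]]] Hx Ht'.
  destruct (U_inv g Hg) as [g' [Hg' [I1 I2]]].
  destruct (reached_distance_two (g' x) (g' t')) as [h [Hh [Hhh Hht]]].
  - rewrite <- (I1 y0), Hgt. exact (U_adj g' _ _ Hg' Hx).
  - exact (U_adj g' _ _ Hg' Ht').
  - exists (fun v => g (h v)). split; [apply U_comp; assumption|split].
    + apply H_comp; assumption.
    + now rewrite Hht, I2.
Qed.

Lemma reached_all t : inX t = false -> reached t.
Proof.
  destruct E_tree as [_ [_ [Hconn _]]]. destruct (Hconn y0 t) as [p Hp].
  assert (Hwalk : forall q a, walk E a q t ->
            (inX a = false -> reached a) -> (inX a = true -> exists s, E s a /\ reached s) ->
            inX t = false -> reached t).
  { induction q as [|b q IH]; intros a Hw HY HX; [rewrite <- Hw; exact HY|].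
    destruct Hw as [Hab Hw]. apply (IH b Hw); intro eb; rewrite (E_bip a b Hab), eb in HY, HX.
    - destruct (HX eq_refl) as [s [Hs Hrs]]. exact (reached_step s a b Hrs Hs Hab).
    - exists a. split; [exact Hab|exact (HY eq_refl)]. }
  apply (Hwalk p y0 Hp).
  - intros _. exists (fun v => v). split; [exact U_id|split; [|reflexivity]].
    exact (H_stab_y0 _ U_id eq_refl).
  - rewrite y0_side. discriminate.
Qed.

Lemma generators_generate g : U g -> H (restrict g).
Proof.
  intro Hg. destruct (reached_all (g y0)) as [h [Hh [Hhh Hht]]]; [now rewrite U_inX|].
  destruct (U_inv h Hh) as [h' [Hh' [I1 I2]]].
  replace g with (fun v => h ((fun v => h' (g v)) v))
    by (apply functional_extensionality; intro v; now rewrite I2).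
  apply (H_comp h (fun v => h' (g v))); [exact Hh|apply U_comp; assumption|exact Hhh|].
  apply H_stab_y0; [apply U_comp; assumption|]. now rewrite <- Hht, I1.
Qed.

End Generation.

Lemma box_product_compactly_generated : compactly_generated (box_product E inX c M N).
Proof.
  destruct (classic (inhabited (VY inX))) as [[[y0 y0_side]]|Hempty].
  - destruct (has_in_neighbour y0) as [x0 x0_y0].
    assert (x0_side : inX x0 = true) by (now rewrite (E_bip _ _ x0_y0), y0_side).
    exists (generators y0 x0). split.
    + apply (compact_ext (fun h =>
               exists g, ((U g /\ g y0 = y0) \/ stab_by x0 g) /\ h = restrict g));
        [reflexivity|].
      apply compact_image; [exact restrict_continuous|].
      apply compact_union; [exact (U_stab_compact y0 y0_side)|exact (stab_by_compact x0 x0_side)].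
    + split.
      * intros k [g [Hg ->]]. apply box_product_iff. exists g. split; [|reflexivity].
        destruct Hg as [[Hg _]|[Hg _]]; exact Hg.
      * intros H H_group H_gen b Hb. apply box_product_iff in Hb as [g [Hg ->]].
        exact (generators_generate y0 x0 y0_side x0_side x0_y0 H H_group H_gen g Hg).
  - exists (box_product E inX c M N). split; [|split; auto].
    apply compact_subsingleton. intros f g _ _. apply functional_extensionality.
    intro y. exfalso. exact (Hempty (inhabits y)).
Qed.

End Colouring.

Theorem theorem6p3 (X Y : Type) (M : (X -> X) -> Prop) (N : (Y -> Y) -> Prop)
    (V : Type) (E : V -> V -> Prop) (inX : V -> bool) (c : V -> V -> X + Y) :
  (exists x1 x2 : X, x1 <> x2) ->
  (exists y1 y2 : Y, y1 <> y2) ->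
  perm_group M -> perm_group N ->
  transitive M -> transitive N ->
  compactly_generated M ->
  (forall x : X, pw_compact (stab M x)) ->
  pw_compact N ->
  is_tree E -> bipartition E inX -> legal_colouring E inX c ->
  compactly_generated (box_product E inX c M N) /\
  (forall y : VY inX, pw_compact (stab (box_product E inX c M N) y)).
Proof.
  intros [x1 _] [y1 _] M_group N_group M_transitive N_transitive [C [C_compact C_generates]]
    M_stab_compact N_compact E_tree E_bip c_legal.
  destruct (transitive_compact_finite N y1 N_transitive N_compact) as [LY LY_cover].
  pose proof (schreier_ball_mono C x1) as TX_mono.
  pose proof (schreier_ball_cover M C x1 M_group M_transitive C_compact C_generates) as TX_cover.
  split.
  - exact (box_product_compactly_generated E inX c E_tree E_bip c_legal x1 y1 M N M_group N_group
             M_stab_compact N_compact LY LY_cover _ TX_mono TX_cover C C_compact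
             M_transitive N_transitive C_generates).
  - exact (box_product_stab_compact E inX c E_tree c_legal x1 y1 M N M_group N_group
             M_stab_compact N_compact LY LY_cover _ TX_mono TX_cover).
Qed.
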